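(* The group $\mathbb{Z}^2$ admits no context-free-preimage left-order. In particular, if a finitely generated group $G$ admits a context-free-preimage left-order, then $G$ does not contain a subgroup isomorphic to $\mathbb{Z}^2$.
   Context: A finite generating set of a group $G$ is a finite set $X$ with a surjective monoid homomorphism $\pi\colon X^*\to G$. A left-order $\prec$ on $G$ with positive cone $P=\{g:1\prec g\}$ is a context-free-preimage left-order if, for a finite generating set $(X,\pi)$ of $G$, the full preimage $\pi^{-1}(P)\subseteq X^*$ is a context-free language (accepted by a nondeterministic pushdown automaton). *)

From mathcomp Require Import all_boot all_algebra.
Set Implicit Arguments. Unset Strict Implicit. Unset Printing Implicit Defensive.
Import GRing.Theory.

Record group := Group {
  gcarrier :> Type;
  gmul : gcarrier -> gcarrier -> gcarrier;
  gone : gcarrier;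
  ginv : gcarrier -> gcarrier;
  gmulA : forall x y z, gmul x (gmul y z) = gmul (gmul x y) z;
  gmul1 : forall x, gmul gone x = x;
  gmulr1 : forall x, gmul x gone = x;
  gmulV : forall x, gmul (ginv x) x = gone;
  gmulVr : forall x, gmul x (ginv x) = gone
}.

Definition group_hom (G H : group) (f : G -> H) : Prop :=
  forall x y, f (gmul x y) = gmul (f x) (f y).

Definition Z2_group : group.
Proof.
refine (@Group (int * int)%type
  (fun a b => (a.1 + b.1, a.2 + b.2)%R) (0, 0)%R (fun a => (- a.1, - a.2)%R)
  _ _ _ _ _).
- by move=> [a b] [c d] [e f] /=; rewrite !addrA.
- by move=> [a b] /=; rewrite !add0r.
- by move=> [a b] /=; rewrite !addr0.
- by move=> [a b] /=; rewrite !addNr.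
- by move=> [a b] /=; rewrite !subrr.
Defined.

Definition eval_word (G : group) (X : Type) (gen : X -> G) (w : seq X) : G :=
  foldr (fun x g => gmul (gen x) g) (gone G) w.

Definition generating (G : group) (X : finType) (gen : X -> G) : Prop :=
  forall g : G, exists w : seq X, eval_word gen w = g.

Definition finitely_generated (G : group) : Prop :=
  exists (X : finType) (gen : X -> G), generating gen.

Definition left_order (G : group) (lt : G -> G -> Prop) : Prop :=
  [/\ (forall x, ~ lt x x),
      (forall x y z, lt x y -> lt y z -> lt x z),
      (forall x y, x <> y -> lt x y \/ lt y x) &
      (forall g x y, lt x y -> lt (gmul g x) (gmul g y))].

Definition positive_cone (G : group) (lt : G -> G -> Prop) : G -> Prop :=
  fun g => lt (gone G) g.

Record pda (X : finType) := Pda {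
  pda_state : finType;
  pda_stack : finType;
  pda_start : pda_state;
  pda_bottom : pda_stack;
  pda_final : pred pda_state;
  (* trans q a z : possible moves reading a (None = epsilon move) with z
     on top of the stack: new state and word replacing z *)
  pda_trans : pda_state -> option X -> pda_stack -> seq (pda_state * seq pda_stack)
}.

Section PDA.
Variables (X : finType) (M : pda X).

Definition config := (pda_state M * seq X * seq (pda_stack M))%type.

Inductive pda_step : config -> config -> Prop :=
  | step_eps q w z gam q' alpha :
      (q', alpha) \in pda_trans q None z ->
      pda_step (q, w, z :: gam) (q', w, alpha ++ gam)
  | step_read q a w z gam q' alpha :
      (q', alpha) \in pda_trans q (Some a) z ->
      pda_step (q, a :: w, z :: gam) (q', w, alpha ++ gam).

Inductive pda_steps : config -> config -> Prop :=
  | steps_refl c : pda_steps c c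
  | steps_cons c1 c2 c3 : pda_step c1 c2 -> pda_steps c2 c3 -> pda_steps c1 c3.

Definition pda_accepts (w : seq X) : Prop :=
  exists (q : pda_state M) (gam : seq (pda_stack M)),
    pda_final q /\ pda_steps (pda_start M, w, [:: pda_bottom M]) (q, [::], gam).
End PDA.

Definition context_free (X : finType) (L : seq X -> Prop) : Prop :=
  exists M : pda X, forall w, L w <-> pda_accepts M w.

Definition cf_preimage_left_order (G : group) (lt : G -> G -> Prop) : Prop :=
  left_order lt /\
  exists (X : finType) (gen : X -> G),
    generating gen /\
    context_free (fun w => positive_cone lt (eval_word gen w)).

From mathcomp Require Import all_boot all_algebra zify.
From Stdlib Require Import Classical.
Set Implicit Arguments. Unset Strict Implicit. Unset Printing Implicit Defensive.
Import GRing.Theory Num.Theory.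

(* The order restricts to a total order on Z^2, with
   positive cone P.  For nonzero a, b, c, d in Z^2, choosing words for their
   images shows that the words over {a, b, c, d} with value in P form the
   preimage of a context-free language under a nonerasing homomorphism; so they
   satisfy the pumping lemma.  Pumping a^n0 b^n1 c^n2 d^n3 with n1, n2 large
   changes its value by multiples of a short combination D of two consecutive
   letters.
   If P is archimedean it has no least element, as Z^2 is not cyclic: with
   a, b, c, d = e1, e2, -e1, -e2, take the value to be positive but below every
   positive such D; then pumping down or up leaves the cone.  Otherwise some
   positive c, d satisfy n c < d for all n; with p the pumping constant, the
   word d^(p+1) (-c)^(p+1) (-d)^(p+1) c^(p+2) has value c, and pumping it yields
   c + D and c - D, which cannot both be positive. *)

Definition oseq (T : Type) (a : option T) : seq T := if a is Some x then [:: x] else [::].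

Lemma size_oseq (T : Type) (a : option T) : size (oseq a) <= 1.
Proof. by case: a. Qed.

Lemma flatten_nseqSr (T : Type) n (v : seq T) :
  flatten (nseq n.+1 v) = flatten (nseq n v) ++ v.
Proof. by elim: n => [|n IH] /=; rewrite ?cats0 // -catA -IH. Qed.

Definition pumping_property (T : Type) (L : seq T -> Prop) (p : nat) :=
  forall w, L w -> p < size w ->
  exists u v x y z, [/\ w = u ++ v ++ x ++ y ++ z, size (v ++ x ++ y) <= p,
    0 < size (v ++ y) &
    forall s, L (u ++ flatten (nseq s v) ++ x ++ flatten (nseq s y) ++ z)].

Lemma pda_steps_trans (X : finType) (M : pda X) c1 c2 c3 :
  pda_steps c1 c2 -> pda_steps c2 c3 -> @pda_steps X M c1 c3.
Proof. by elim=> // {}c1 c c' step _ IH /IH; apply: steps_cons step. Qed.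

Section Derivations.
Variables (X : finType) (M : pda X).
Local Notation state := (pda_state M).
Local Notation symbol := (pda_stack M).
Local Notation pda_step := (@pda_step X M).
Local Notation pda_steps := (@pda_steps X M).

(* [derivation q zs w (Some q') n]: from state q, M can read w while popping
   exactly the segment zs from the top of its stack, ending in state q'.
   [derivation q zs w None n]: from state q, M can read w and reach a final
   state without looking below zs.  Proofs of these are the derivation trees
   of the pumping lemma; n counts their nodes. *)
Inductive derivation : state -> seq symbol -> seq X -> option state -> nat -> Prop :=
| deriv_nil q : derivation q [::] [::] (Some q) 0
| deriv_final q zs : pda_final q -> derivation q zs [::] None 0
| deriv_pop q a z zs q1 alpha w1 w2 q2 r n1 n2 :
    (q1, alpha) \in pda_trans q a z ->
    derivation q1 alpha w1 (Some q2) n1 -> derivation q2 zs w2 r n2 ->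
    derivation q (z :: zs) (oseq a ++ w1 ++ w2) r (n1 + n2).+1
| deriv_stop q a z zs q1 alpha w1 n1 :
    (q1, alpha) \in pda_trans q a z ->
    derivation q1 alpha w1 None n1 ->
    derivation q (z :: zs) (oseq a ++ w1) None n1.+1.

Lemma pda_step_trans q a z zs q1 alpha w : (q1, alpha) \in pda_trans q a z ->
  pda_step (q, oseq a ++ w, z :: zs) (q1, w, alpha ++ zs).
Proof. by case: a => [x|] tr; constructor. Qed.

Lemma derivation_steps q zs w r n : derivation q zs w r n -> forall w' zs',
  match r with
  | Some q' => pda_steps (q, w ++ w', zs ++ zs') (q', w', zs')
  | None => exists qf zs'', pda_final qf /\
              pda_steps (q, w ++ w', zs ++ zs') (qf, w', zs'')
  end.
Proof.
elim=> {q zs w r n} [q|q zs qf|q a z zs q1 alpha w1 w2 q2 r n1 n2 tr _ IH1 _ IH2|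
                     q a z zs q1 alpha w1 n1 tr _ IH] w' zs'.
- exact: steps_refl.
- by exists q, (zs ++ zs'); split=> //; apply: steps_refl.
- have step := pda_step_trans (zs ++ zs') (w1 ++ w2 ++ w') tr.
  have run1 := pda_steps_trans (steps_cons step (IH1 (w2 ++ w') (zs ++ zs'))).
  rewrite -!catA; case: r IH2 => [q'|] IH2; first exact/run1/IH2.
  by have [qf [zs'' [fin run2]]] := IH2 w' zs'; exists qf, zs''; split=> //; apply: run1.
- have step := pda_step_trans (zs ++ zs') (w1 ++ w') tr.
  have [qf [zs'' [fin run]]] := IH w' (zs ++ zs').
  by exists qf, zs''; split=> //; rewrite -catA; apply: steps_cons step run.
Qed.

Lemma derivation_split xs : forall q ys w r n, derivation q (xs ++ ys) w r n ->
  (exists q2 w1 w2 n1 n2,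
     [/\ w = w1 ++ w2, derivation q xs w1 (Some q2) n1 & derivation q2 ys w2 r n2])
  \/ (r = None /\ exists n', derivation q xs w None n').
Proof.
elim: xs => [|x xs IH] q ys w r n der.
  by left; exists q, [::], w, 0, n; split=> //; constructor.
inversion der as [|q0 zs0 fin|q0 a z zs q1 alpha w1 w2 q2 r0 n1 n2 tr der1 der2|
                  q0 a z zs q1 alpha w1 n1 tr der1]; subst.
- by right; split=> //; exists 0; constructor.
- case: (IH _ _ _ _ _ der2) => [[q3 [w2a [w2b [m1 [m2 [-> derA derB]]]]]]|[-> [n' derA]]].
  + left; exists q3, (oseq a ++ w1 ++ w2a), w2b, (n1 + m1).+1, m2.
    by split=> //; [rewrite !catA | apply: deriv_pop tr der1 derA].
  + by right; split=> //; exists (n1 + n').+1; apply: deriv_pop tr der1 derA.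
- by right; split=> //; exists n1.+1; apply: deriv_stop tr der1.
Qed.

Lemma steps_derivation c c' : pda_steps c c' -> forall qf zs, c' = (qf, [::], zs) ->
  pda_final qf -> exists n, derivation c.1.1 c.2 c.1.2 None n.
Proof.
elim=> {c c'} [c qf zs -> fin|c1 c2 c3 step _ IH qf zs E fin].
  by exists 0; constructor.
have [n der] := IH qf zs E fin.
case: step der => [q w z zs' q' alpha tr|q x w z zs' q' alpha tr] /= der;
  case: (derivation_split der) =>
    [[q2 [w1 [w2 [n1 [n2 [-> der1 der2]]]]]]|[_ [n' der1]]].
- by exists (n1 + n2).+1; apply: (deriv_pop (a := None)) tr der1 der2.
- by exists n'.+1; apply: (deriv_stop (a := None)) tr der1.
- by exists (n1 + n2).+1; apply: (deriv_pop (a := Some x)) tr der1 der2.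
- by exists n'.+1; apply: (deriv_stop (a := Some x)) tr der1.
Qed.

Lemma pda_accepts_derivation w : pda_accepts M w <->
  exists n, derivation (pda_start M) [:: pda_bottom M] w None n.
Proof.
split=> [[q [zs [fin run]]]|[n der]]; first by have := steps_derivation run (erefl _) fin.
by have /= := derivation_steps der [::] [::]; rewrite !cats0.
Qed.

Definition label := (state * seq symbol * option state)%type.

Definition derives (l : label) w n := derivation l.1.1 l.1.2 w l.2 n.

Definition context (l l' : label) (u y : seq X) k :=
  forall w n, derives l' w n -> derives l (u ++ w ++ y) (n + k).

Lemma context_id l : context l l [::] [::] 0.
Proof. by move=> w n; rewrite cats0 addn0. Qed.

Lemma context_comp l1 l2 l3 u y k u' y' k' :
  context l1 l2 u y k -> context l2 l3 u' y' k' ->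
  context l1 l3 (u ++ u') (y' ++ y) (k' + k).
Proof. by move=> C1 C2 w n /C2 /C1; rewrite !catA addnA. Qed.

Lemma context_iter l v y k : context l l v y k ->
  forall s, context l l (flatten (nseq s v)) (flatten (nseq s y)) (s * k).
Proof.
move=> C; elim=> [|s IH]; first exact: context_id.
by rewrite [X in context _ _ X]flatten_nseqSr mulSn; apply: context_comp IH C.
Qed.

Section Children.
Variables (q : state) (a : option X) (z : symbol) (zs : seq symbol).
Variables (q1 : state) (alpha : seq symbol).
Hypothesis tr : (q1, alpha) \in pda_trans q a z.

Lemma context_pop_left r q2 w2 n2 : derivation q2 zs w2 r n2 ->
  context (q, z :: zs, r) (q1, alpha, Some q2) (oseq a) w2 n2.+1.
Proof. by move=> der2 w n der1; rewrite /derives /= addnS; apply: deriv_pop tr der1 der2. Qed.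

Lemma context_pop_right r q2 w1 n1 : derivation q1 alpha w1 (Some q2) n1 ->
  context (q, z :: zs, r) (q2, zs, r) (oseq a ++ w1) [::] n1.+1.
Proof.
move=> der1 w n der2; rewrite /derives /= cats0 -catA addnS addnC.
exact: deriv_pop tr der1 der2.
Qed.

Lemma context_stop : context (q, z :: zs, None) (q1, alpha, None) (oseq a) [::] 1.
Proof. by move=> w n der; rewrite /derives /= cats0 addn1; apply: deriv_stop tr der. Qed.

End Children.

(* The stack segments labelling derivation trees are suffixes of pushed words,
   so only finitely many labels occur. *)
Definition pushed_words : seq (seq symbol) :=
  [:: pda_bottom M] :: [seq t.2 | t <- flatten
     [seq pda_trans x.1.1 x.1.2 x.2 | x <- enum {: state * option X * symbol}]].

Definition stack_words : seq (seq symbol) :=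
  flatten [seq [seq drop i s | i <- iota 0 (size s).+1] | s <- pushed_words].

Lemma drop_stack_words s i : s \in pushed_words -> i <= size s ->
  drop i s \in stack_words.
Proof.
move=> s_in le_i; apply/flattenP; exists [seq drop i s | i <- iota 0 (size s).+1].
  by apply/mapP; exists s.
by apply/mapP; exists i; rewrite // mem_iota add0n ltnS.
Qed.

Lemma stack_words_behead z zs : z :: zs \in stack_words -> zs \in stack_words.
Proof.
case/flattenP=> _ /mapP [s s_in ->] /mapP [i]; rewrite mem_iota add0n ltnS => le_i E.
have lt_i : i < size s by rewrite -subn_gt0 -size_drop -E.
by rewrite -[zs]/(behead (z :: zs)) E -drop1 drop_drop add1n drop_stack_words.
Qed.

Lemma trans_stack_words q a z q1 alpha : (q1, alpha) \in pda_trans q a z ->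
  alpha \in stack_words.
Proof.
move=> tr; rewrite -[alpha]drop0 drop_stack_words // inE; apply/orP; right.
apply/mapP; exists (q1, alpha) => //; apply/flattenP; exists (pda_trans q a z) => //.
by apply/mapP; exists (q, a, z); rewrite ?mem_enum.
Qed.

Lemma bottom_stack_words : [:: pda_bottom M] \in stack_words.
Proof. by rewrite -[[:: _]]drop0 drop_stack_words ?mem_head. Qed.

Definition reachable (l : label) := l.1.2 \in stack_words.

Definition labels : seq label :=
  [seq (x.1, s, x.2) | x <- enum {: state * option state}, s <- stack_words].

Lemma reachable_labels l : reachable l -> l \in labels.
Proof.
case: l => [[q s] r] s_in.
by apply: (allpairs_f (fun x s => (x.1, s, x.2)) (x := (q, r))); rewrite ?mem_enum.
Qed.

Local Notation N := (size labels).

Lemma derives_large_child l w n b : derives l w n -> reachable l -> 0 < b ->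
  b.*2 <= size w ->
  exists l' u w' y k n', [/\ w = u ++ w' ++ y, context l l' u y k.+1,
    derives l' w' n', n = n' + k.+1 & reachable l' /\ b <= size w'].
Proof.
case: l => [[q zs] r] der reach b_gt0; rewrite /derives /= in der *.
case: der reach => [q'|q' zs' _|q' a z zs' q1 alpha w1 w2 q2 r' n1 n2 tr der1 der2|
                    q' a z zs' q1 alpha w1 n1 tr der1] reach /= big;
  try lia; rewrite !size_cat in big; have := size_oseq a.
- have reach1 : reachable (q1, alpha, Some q2) by apply: trans_stack_words tr.
  case: (leqP b (size w1)) => [big1 _|small1 small_a].
    exists (q1, alpha, Some q2), (oseq a), w1, w2, n2, n1.
    by split=> //; [apply: context_pop_left | lia].
  case: (leqP b (size w2)) => [big2|small2]; last lia.
  exists (q2, zs', r'), (oseq a ++ w1), w2, [::], n1, n2; rewrite cats0 catA.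
  split=> //.
  + exact: (context_pop_right tr der1).
  + by rewrite addnS addnC.
  + by split=> //; apply: stack_words_behead reach.
- case: (leqP b (size w1)) => [big1 _|]; last lia.
  exists (q1, alpha, None), (oseq a), w1, [::], 0, n1; rewrite cats0 addn1.
  by split=> //; [apply: context_stop | split=> //; apply: trans_stack_words tr].
Qed.

Lemma derives_window l w n : derives l w n -> reachable l -> 2 ^ N <= size w ->
  exists l' u w' y k n', [/\ w = u ++ w' ++ y, context l l' u y k,
    derives l' w' n', n = n' + k & reachable l' /\ 2 ^ N <= size w' < 2 ^ N.+1].
Proof.
elim/ltn_ind: n l w => n IH l w der reach big.
case: (ltnP (size w) (2 ^ N.+1)) => [small|].
  exists l, [::], w, [::], 0, n; rewrite cats0 addn0.
  by split=> //; [apply: context_id | split=> //; apply/andP].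
rewrite {1}expnS {1}mul2n => /(derives_large_child der reach) [|l1 [u1 [w1 [y1 [k1 [n1 ]]]]]].
  by rewrite expn_gt0.
move=> [-> C1 der1 En [reach1 big1]].
have [|l' [u [w' [y [k [n' [-> C der' En' window]]]]]]] := IH n1 _ _ _ der1 reach1 big1.
  by rewrite En; lia.
exists l', (u1 ++ u), w', (y ++ y1), (k + k1.+1), n'.
by split=> //; [rewrite !catA | apply: (context_comp C1 C) | rewrite En En' addnA].
Qed.

Definition hits (l : label) (S : seq label) w n := exists2 l', l' \in S &
  exists u x y k m, [/\ w = u ++ x ++ y, context l l' u y k, derives l' x m & n = m + k].

Definition pumpable (l : label) w n := exists l' u v x y z k1 k2 m,
  [/\ w = u ++ v ++ x ++ y ++ z, context l l' u z k1, context l' l' v y k2.+1,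
      derives l' x m & n = m + k2.+1 + k1].

(* [S] holds the labels on the path from the root; descending to a child with
   half of the yield, a label repeats before the [N] labels are used up. *)
Lemma derives_repeat S l w n : derives l w n -> reachable l -> uniq S ->
  {subset S <= labels} -> 2 ^ (N - size S) <= size w -> hits l S w n \/ pumpable l w n.
Proof.
elim/ltn_ind: n S l w => n IH S l w der reach uniqS subS big.
case: (boolP (l \in S)) => [l_in|l_notin].
  left; exists l => //; exists [::], w, [::], 0, n; rewrite cats0 addn0.
  by split=> //; apply: context_id.
have uniqS' : uniq (l :: S) by rewrite /= l_notin.
have subS' : {subset l :: S <= labels}.
  by move=> l'; rewrite inE => /predU1P [->|/subS //]; apply: reachable_labels.
have /= le_S := uniq_leq_size uniqS' subS'.
have /(derives_large_child der reach) [|lc [un [wc [zn [kn [nc ]]]]]] :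
    (2 ^ (N - size (l :: S))).*2 <= size w by rewrite -mul2n -expnS /= subnSK.
  by rewrite expn_gt0.
move=> [-> Cn derc En [reachc bigc]].
have [|hit|pump] := IH nc _ _ _ _ derc reachc uniqS' subS' bigc; first by rewrite En; lia.
- case: hit => l'; rewrite inE => /predU1P [->|l'_in] [u [x [y [k [m [-> C derx Enc]]]]]].
    right; exists l, [::], (un ++ u), x, (y ++ zn), [::], 0, (k + kn), m.
    split=> //; [by rewrite cats0 !catA | exact: context_id | | by rewrite En Enc; lia].
    by rewrite -addnS; apply: (context_comp Cn C).
  left; exists l' => //; exists (un ++ u), x, (y ++ zn), (k + kn.+1), m.
  by split=> //; [rewrite !catA | apply: (context_comp Cn C) | rewrite En Enc addnA].
- case: pump => l' [u [v [x [y [z [k1 [k2 [m [-> C1 C2 derx Enc]]]]]]]]].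
  right; exists l', (un ++ u), v, x, y, (z ++ zn), (k1 + kn.+1), k2, m.
  by split=> //; [rewrite !catA | apply: (context_comp Cn C1) | rewrite En Enc !addnA].
Qed.

Theorem pda_pumping : exists p, pumping_property (pda_accepts M) p.
Proof.
exists (2 ^ N.+1) => w /pda_accepts_derivation [n der] big.
elim/ltn_ind: n der => n IH der.
have [|l [u1 [w1 [z1 [k1 [n1 [Ew C1 der1 En [reach1 /andP [big1 small1]]]]]]]]] :=
  derives_window (l := (_, _, None)) der bottom_stack_words _.
  by rewrite expnS in big; lia.
have sub0 : {subset [::] <= labels} by [].
have := derives_repeat der1 reach1 (isT : uniq [::]) sub0; rewrite subn0.
case/(_ big1) => [[l' //]|[l' [u2 [v [x [y [z2 [k2 [k3 [m [Ew1 C2 C3 derx Em]]]]]]]]]]].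
case: (posnP (size (v ++ y))) => [/eqP|vy_gt0].
  rewrite size_cat addn_eq0 !size_eq0 => /andP [/eqP v0 /eqP y0].
  apply: (IH (m + k2 + k1)); first by rewrite En Em; lia.
  by have := C1 _ _ (C2 _ _ derx); rewrite Ew Ew1 v0 y0.
exists (u1 ++ u2), v, x, y, (z2 ++ z1); split=> //.
- by rewrite Ew Ew1 !catA.
- by move: small1; rewrite Ew1 !size_cat; lia.
- move=> s; apply/pda_accepts_derivation; exists (m + s * k3.+1 + k2 + k1).
  by have := C1 _ _ (C2 _ _ (context_iter C3 s derx)); rewrite !catA.
Qed.

End Derivations.

Section Preimage.
Variables (X S : finType) (M : pda X) (h : S -> seq X).
Hypothesis h_neq0 : forall a, h a <> [::].
Local Notation state := (pda_state M).
Local Notation symbol := (pda_stack M).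
Local Notation hword s := (flatten (map h s)).

Definition hmax := \max_(a : S) size (h a).

(* The states of the preimage automaton are pairs of a state of M and a
   buffer [Some (a, k)]: M is in the middle of reading h a, of which the
   first k letters are already consumed. *)
Local Notation buffer := (option (S * 'I_hmax.+1)).

Definition pending (b : buffer) : seq X := if b is Some (a, k) then drop k (h a) else [::].

Definition preim_final (p : state * buffer) : bool := pda_final p.1 && (pending p.2 == [::]).

Definition buffer_moves q (b : buffer) z : seq (state * buffer * seq symbol) :=
  if b is Some (a, k) then
    if drop k (h a) is x :: _ then
      [seq ((t.1, Some (a, inord k.+1)), t.2) | t <- pda_trans q (Some x) z]
    else [:: ((q, None), [:: z])]
  else [::].

Definition preim_trans (p : state * buffer) (c : option S) z :
    seq (state * buffer * seq symbol) :=
  match c, p.2 with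
  | Some a, None => [:: ((p.1, Some (a, ord0)), [:: z])]
  | Some _, Some _ => [::]
  | None, b => [seq ((t.1, b), t.2) | t <- pda_trans p.1 None z] ++ buffer_moves p.1 b z
  end.

Definition preim_pda : pda S :=
  Pda (pda_start M, None) (pda_bottom M) preim_final preim_trans.

Definition unbuffer (c : config preim_pda) : config M :=
  (c.1.1.1, pending c.1.1.2 ++ hword c.1.2, c.2).

Lemma drop_inordS a (k : 'I_hmax.+1) x rest : drop k (h a) = x :: rest ->
  drop (@inord hmax k.+1) (h a) = rest.
Proof.
move=> E; have lt_k : k < size (h a) by rewrite -subn_gt0 -size_drop E.
have le_hmax : size (h a) <= hmax by apply: (leq_bigmax a).
rewrite inordK; last exact: leq_trans lt_k _.
by rewrite -add1n -drop_drop E /= drop0.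
Qed.

Lemma preim_step_sound c c' : pda_step c c' -> pda_steps (unbuffer c) (unbuffer c').
Proof.
case=> [[q b] w z zs [q' b'] alpha|[q b] a w z zs [q' b'] alpha];
  rewrite /= /unbuffer /=.
- rewrite mem_cat => /orP [/mapP [[q1 al] tr [-> -> ->]]|].
    exact/steps_cons/steps_refl/step_eps.
  case: b => [[a k]|] //=; case E: (drop k (h a)) => [|x rest].
    by rewrite inE => /eqP [-> -> ->]; apply: steps_refl.
  move=> /mapP [[q1 al] tr [-> -> ->]] /=; rewrite (drop_inordS E).
  exact/steps_cons/steps_refl/step_read.
- case: b => [//|]; rewrite inE => /eqP [-> -> ->] /=; rewrite drop0.
  exact: steps_refl.
Qed.

Lemma preim_steps_sound c c' : pda_steps c c' -> pda_steps (unbuffer c) (unbuffer c').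
Proof.
elim=> [c0|c1 c2 c3 step _ IH]; first exact: steps_refl.
exact: pda_steps_trans (preim_step_sound step) IH.
Qed.

Definition accepts_from (c : config preim_pda) :=
  exists p zs, preim_final p /\ pda_steps c (p, [::], zs).

Lemma accepts_from_step c c' : pda_step c c' -> accepts_from c' -> accepts_from c.
Proof. by move=> step [p [zs [fin run]]]; exists p, zs; split=> //; apply: steps_cons run. Qed.

Lemma hword_eq0 s : hword s = [::] -> s = [::].
Proof. by case: s => //= a s; case E: (h a) => [|x l] //; have := h_neq0 E. Qed.

Lemma buffer_refill q b s z zs x w : pending b ++ hword s = x :: w ->
  exists a (k : 'I_hmax.+1) rest s', [/\ drop k (h a) = x :: rest, rest ++ hword s' = w &
    accepts_from ((q, Some (a, k)), s', z :: zs) -> accepts_from ((q, b), s, z :: zs)].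
Proof.
have from_empty s0 : hword s0 = x :: w -> exists a (k : 'I_hmax.+1) rest s',
    [/\ drop k (h a) = x :: rest, rest ++ hword s' = w &
    accepts_from ((q, Some (a, k)), s', z :: zs) -> accepts_from ((q, None), s0, z :: zs)].
  case: s0 => [//|a s0] /=; case E: (h a) => [|y rest] /=; first by have := h_neq0 E.
  case=> <- <-; exists a, ord0, rest, s0; rewrite drop0 E; split=> //.
  by apply: accepts_from_step; apply: (@step_read _ _ _ _ _ _ zs _ [:: z]); rewrite inE.
case: b => [[a k]|] /=; last exact: from_empty.
case E: (drop k (h a)) => [|y rest] /=.
  move/from_empty => [a' [k' [rest' [s' [E' Ew load]]]]].
  exists a', k', rest', s'; split=> // /load; apply: accepts_from_step.
  by apply: (@step_eps _ _ _ _ _ zs _ [:: z]); rewrite /= mem_cat /= E inE eqxx orbT.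
by case=> <- <-; exists a, k, rest, s.
Qed.

Lemma preim_steps_complete c c' : pda_steps c c' -> forall q b s zs qf zs',
  c = (q, pending b ++ hword s, zs) -> c' = (qf, [::], zs') -> pda_final qf ->
  accepts_from ((q, b), s, zs).
Proof.
elim=> {c c'} [c|c1 c2 c3 step _ IH] q b s zs qf zs' E1.
  rewrite E1; case=> -> /(congr1 size) /eqP; rewrite size_cat addn_eq0 !size_eq0.
  case/andP=> /eqP pend0 /eqP/hword_eq0 -> -> fin.
  by exists (qf, b), zs'; split; [rewrite /preim_final fin pend0 | apply: steps_refl].
case: step E1 IH => [q0 w z zs0 q' alpha tr|q0 x w z zs0 q' alpha tr] [<- Ew <-] IH E3 fin.
  apply: (accepts_from_step (step_eps _ _ _)) (IH _ _ _ _ _ _ _ E3 fin).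
    by rewrite /= mem_cat; apply/orP; left; apply/mapP; exists (q', alpha).
  by rewrite Ew.
have [a [k [rest [s' [E Ew' refill]]]]] := buffer_refill q0 z zs0 (esym Ew).
apply/refill/(accepts_from_step (step_eps _ _ _)).
  rewrite /= mem_cat /= E; apply/orP; right; apply/mapP; exists (q', alpha) => //.
apply: (IH _ _ _ _ _ _ _ E3 fin).
by rewrite /= (drop_inordS E) Ew'.
Qed.

Lemma preim_pda_accepts s : pda_accepts preim_pda s <-> pda_accepts M (hword s).
Proof.
split=> [[[q b] [zs [/andP [fin /eqP pend0] run]]]|[qf [zs [fin run]]]].
  have := preim_steps_sound run; rewrite /unbuffer /= pend0 cats0 => run'.
  by exists q, zs.
have [p [zs' [fin' run']]] := preim_steps_complete run (b := None) (s := s) (erefl _) (erefl _) fin.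
by exists p, zs'.
Qed.

End Preimage.

Lemma context_free_preim (X S : finType) (L : seq X -> Prop) (h : S -> seq X) :
  (forall a, h a <> [::]) -> context_free L -> context_free (fun s => L (flatten (map h s))).
Proof.
move=> h_neq0 [M accM]; exists (preim_pda M h) => s.
by rewrite preim_pda_accepts // accM.
Qed.

Lemma context_free_pumping (X : finType) (L : seq X -> Prop) :
  context_free L -> exists p, pumping_property L p.
Proof.
move=> [M accM]; have [p pump] := pda_pumping M; exists p => w /accM Lw big.
have [u [v [x [y [z [Ew small vy_gt0 pumped]]]]]] := pump w Lw big.
by exists u, v, x, y, z; split=> // s; apply/accM.
Qed.

Definition block_word n0 n1 n2 n3 : seq 'I_4 :=
  nseq n0 (inord 0) ++ nseq n1 (inord 1) ++ nseq n2 (inord 2) ++ nseq n3 (inord 3).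

Definition block_index n0 n1 n2 k :=
  if k < n0 then 0 else if k < n0 + n1 then 1 else if k < n0 + n1 + n2 then 2 else 3.

Lemma size_block_word n0 n1 n2 n3 : size (block_word n0 n1 n2 n3) = n0 + n1 + n2 + n3.
Proof. by rewrite !size_cat !size_nseq !addnA. Qed.

Lemma nth_block_word n0 n1 n2 n3 k : k < n0 + n1 + n2 + n3 ->
  nth ord0 (block_word n0 n1 n2 n3) k = block_index n0 n1 n2 k :> nat.
Proof.
move=> lt_k; rewrite /block_word /block_index !nth_cat !size_nseq !nth_nseq.
by repeat case: ltnP => ?; rewrite ?inordK //; lia.
Qed.

Definition letter_pair t (c : 'I_4) := (c == t :> nat) || (c == t.+1 :> nat).

Lemma short_factor_letter_pair n0 n1 n2 n3 p u s z :
  u ++ s ++ z = block_word n0 n1 n2 n3 -> size s <= p -> p < n1 -> p < n2 ->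
  exists2 t, t < 3 & all (letter_pair t) s.
Proof.
move=> E le_s lt_n1 lt_n2.
have /(congr1 size) := E; rewrite size_block_word !size_cat => sizeE.
exists (minn (block_index n0 n1 n2 (size u)) 2); first by rewrite ltnS geq_minr.
apply/(all_nthP ord0) => j lt_j.
have -> : nth ord0 s j = nth ord0 (block_word n0 n1 n2 n3) (size u + j).
  by rewrite -E nth_cat ltnNge leq_addr /= addKn nth_cat lt_j.
rewrite /letter_pair nth_block_word; last by lia.
by rewrite /block_index; repeat case: ltnP => ?; lia.
Qed.

Local Open Scope ring_scope.

Definition archimedean_cone (V : zmodType) (P : V -> Prop) :=
  forall c d, P c -> P d -> exists n, P (c *+ n - d).

Definition total_cone (V : zmodType) (P : V -> Prop) :=
  [/\ ~ P 0, forall x y, P x -> P y -> P (x + y) & forall x, x <> 0 -> P x \/ P (- x)].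

Section TotalCone.
Variables (V : zmodType) (P : V -> Prop).
Hypothesis P_cone : total_cone P.

Let P0 : ~ P 0. Proof. by case: P_cone. Qed.
Let PD x y : P x -> P y -> P (x + y). Proof. by case: P_cone => _ + _; apply. Qed.
Let P_total x : x <> 0 -> P x \/ P (- x). Proof. by case: P_cone => _ _; apply. Qed.

Local Notation nonneg x := (x%R = 0 \/ P x).

Lemma pos_asym x : P x -> ~ P (- x).
Proof. by move=> Px PNx; apply: P0; rewrite -(subrr x); apply: PD. Qed.

Lemma pos_add_nonneg x y : P x -> nonneg y -> P (x + y).
Proof. by move=> Px [->|Py]; [rewrite addr0 | apply: PD]. Qed.

Lemma nonneg_add x y : nonneg x -> nonneg y -> nonneg (x + y).
Proof. by move=> [->|Px] y_ge0; [rewrite add0r | right; apply: pos_add_nonneg]. Qed.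

Lemma nonneg_mulrn x n : nonneg x -> nonneg (x *+ n).
Proof.
move=> x_ge0; elim: n => [|n IH]; first by left; rewrite mulr0n.
by rewrite mulrS; apply: nonneg_add.
Qed.

Lemma nonneg_not_posN x : nonneg x -> ~ P (- x).
Proof. by move=> [->|Px]; [rewrite oppr0 | apply: pos_asym]. Qed.

Lemma pos_trichotomy x y : x = y \/ P (x - y) \/ P (y - x).
Proof.
have [->|] := eqVneq x y; first by left.
rewrite -subr_eq0 => /eqP/P_total [Pxy|Pyx]; first by right; left.
by right; right; rewrite opprB in Pyx.
Qed.

Lemma not_archimedean_cone : ~ archimedean_cone P ->
  exists c d, [/\ P c, P d & forall n, P (d - c *+ n)].
Proof.
move=> not_arch.
have [c [d [Pc Pd small]]] : exists c d, [/\ P c, P d & forall n, ~ P (c *+ n - d)].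
  apply: NNPP => none; apply: not_arch => c d Pc Pd; apply: NNPP => small.
  by apply: none; exists c, d; split=> // n Pn; apply: small; exists n.
exists c, d; split=> // n.
have [E|[Pcd|Pdc]] := pos_trichotomy (c *+ n.+1) d.
- by rewrite -E mulrS addrK.
- by case: (small n.+1).
- rewrite -(subrK c (d - c *+ n)); apply: PD => //.
  by rewrite -addrA -opprD -mulrSr.
Qed.

Section Archimedean.
Hypothesis P_arch : archimedean_cone P.
Hypothesis noncyclic : forall g : V, exists x : V, forall k, x <> g *+ k /\ x <> - (g *+ k).

Lemma archimedean_multiples mu : P mu -> (forall nu, P nu -> ~ P (mu - nu)) ->
  forall x, P x -> exists k, x = mu *+ k.
Proof.
move=> Pmu least x Px; have [n] := P_arch Pmu Px.
elim: n x Px => [|n IH] x Px Pn.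
  by move: Pn; rewrite mulr0n sub0r => /(pos_asym Px).
have [->|[Pxmu|Pmux]] := pos_trichotomy x mu; first by exists 1%N.
  have [|k Ek] := IH (x - mu) Pxmu; last by exists k.+1; rewrite mulrS -Ek addrC subrK.
  by rewrite opprB addrA -mulrSr.
by case: (least x Px).
Qed.

Lemma archimedean_no_least mu : P mu -> exists nu, P nu /\ P (mu - nu).
Proof.
move=> Pmu; apply: NNPP => no_nu.
have least nu : P nu -> ~ P (mu - nu) by move=> Pnu Pmunu; apply: no_nu; exists nu.
have multiple := archimedean_multiples Pmu least.
have [x notin] := noncyclic mu.
have [|/multiple [k Ek]|/multiple [k Ek]] := P_total (x := x).
- by have [] := notin 0%N.
- by have [] := notin k.
- by have [_] := notin k; rewrite -Ek opprK.
Qed.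

Lemma archimedean_small (F : seq V) :
  exists nu, P nu /\ forall d, d \in F -> P d -> P (d - nu).
Proof.
elim: F => [|d F [nu0 [Pnu0 small]]].
  have [x notin] := noncyclic 0.
  have [|Px|PNx] := P_total (x := x); first by have [] := notin 0%N.
    by exists x.
  by exists (- x).
have [Pd|nPd] := classic (P d); last first.
  by exists nu0; split=> // d'; rewrite inE => /predU1P [->|/small].
have [mu [Pmu le_nu0 le_d]] : exists mu, [/\ P mu, nonneg (nu0 - mu) & nonneg (d - mu)].
  have [<-|[P1|P2]] := pos_trichotomy nu0 d.
  - by exists nu0; rewrite subrr; split=> //; left.
  - by exists d; rewrite subrr; split=> //; [right | left].
  - by exists nu0; rewrite subrr; split=> //; [left | right].
have [nu [Pnu Pmunu]] := archimedean_no_least Pmu.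
exists nu; split=> // d'; rewrite inE => /predU1P [->|d'_in] Pd'.
  by rewrite -(subrK mu d) -addrA addrC; apply: pos_add_nonneg.
rewrite -(subrK nu0 d') -addrA; apply: PD; first exact: small.
by rewrite -(subrK mu nu0) -addrA addrC; apply: pos_add_nonneg.
Qed.

Lemma archimedean_pump_leaves_cone nu A D : P nu -> D <> 0 ->
  (P D -> P (D - nu)) -> A + D = nu -> ~ (forall s, P (A + D *+ s)).
Proof.
move=> Pnu D_neq0 below AD pumped.
have PA : P A by have := pumped 0%N; rewrite mulr0n addr0.
have [PD'|PND] := P_total D_neq0.
  by have := below PD'; rewrite -AD opprD addrCA subrr addr0; apply: pos_asym.
have [n Pn] := P_arch PND Pnu; apply: (pos_asym Pn).
by rewrite opprB mulNrn opprK -AD -addrA -mulrS.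
Qed.

End Archimedean.

Section NonArchimedean.
Variables (c d : V).
Hypotheses (Pc : P c) (Pd : P d) (below : forall n, P (d - c *+ n)).

Lemma nonarchimedean_pump_sub m0 m1 : (0 < m0 + m1)%N ->
  ~ (P (c + (d *+ m0 - c *+ m1)) /\ P (c - (d *+ m0 - c *+ m1))).
Proof.
case: m0 => [|k] /= m_gt0 [Pplus Pminus].
  case: m1 m_gt0 Pplus {Pminus} => [//|k] _.
  rewrite mulr0n sub0r mulrS opprD addrA subrr add0r.
  by apply: nonneg_not_posN; apply: nonneg_mulrn; right.
apply: (pos_asym (x := (d - c *+ m1.+1) + d *+ k)).
  by apply: pos_add_nonneg; [apply: below | apply: nonneg_mulrn; right].
move: Pminus.
by rewrite opprB addrA -mulrS opprD opprB -addrA -opprD -mulrS.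
Qed.

Lemma nonarchimedean_pump_add m0 m1 : (0 < m0 + m1)%N -> ~ P (c - (c *+ m0 + d *+ m1)).
Proof.
case: m1 => [|k] m_gt0.
  case: m0 m_gt0 => [//|k] _; rewrite mulr0n addr0 mulrS opprD addrA subrr add0r.
  by apply: nonneg_not_posN; apply: nonneg_mulrn; right.
move=> Pminus; apply: (pos_asym (x := d *+ k.+1 - c + c *+ m0)); last first.
  by rewrite addrC addrA opprB.
apply: pos_add_nonneg; last by apply: nonneg_mulrn; right.
rewrite mulrS addrAC; apply: pos_add_nonneg; last by apply: nonneg_mulrn; right.
by rewrite -[c in d - c]mulr1n.
Qed.

End NonArchimedean.
End TotalCone.

Section WordValue.
Variable V : zmodType.

Definition word_value n (v : nat -> V) (w : seq 'I_n) : V := \sum_(c <- w) v c.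

Lemma word_value_cat n (v : nat -> V) (w1 w2 : seq 'I_n) :
  word_value v (w1 ++ w2) = word_value v w1 + word_value v w2.
Proof. exact: big_cat. Qed.

Lemma word_value_nseq n (v : nat -> V) k (c : 'I_n) : word_value v (nseq k c) = v c *+ k.
Proof. by rewrite /word_value big_nseq iter_addr_0. Qed.

Lemma word_value_flatten_nseq n (v : nat -> V) k (w : seq 'I_n) :
  word_value v (flatten (nseq k w)) = word_value v w *+ k.
Proof. by rewrite /word_value big_flatten big_nseq iter_addr_0. Qed.

Lemma word_value_pump n (v : nat -> V) (u l x r z : seq 'I_n) :
  word_value v (u ++ l ++ x ++ r ++ z) = word_value v (u ++ x ++ z) + word_value v (l ++ r).
Proof.
rewrite -word_value_cat; apply: perm_big.
rewrite -[(u ++ _) ++ _]catA perm_cat2l -[(x ++ z) ++ _]catA perm_catCA perm_cat2l.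
by rewrite perm_sym perm_catC -catA.
Qed.

Lemma word_value_letter_pair (v : nat -> V) t (w : seq 'I_4) : all (letter_pair t) w ->
  exists m0 m1, size w = (m0 + m1)%N /\ word_value v w = v t *+ m0 + v t.+1 *+ m1.
Proof.
elim: w => [|c w IH]; first by exists 0%N, 0%N; rewrite /word_value big_nil addr0.
case/andP=> /orP [/eqP ct|/eqP ct] /IH [m0 [m1 [sizeE valueE]]].
  exists m0.+1, m1; rewrite /= sizeE /word_value big_cons -/(word_value v w) valueE ct.
  by rewrite mulrS addrA.
exists m0, m1.+1; rewrite /= sizeE addnS /word_value big_cons -/(word_value v w) valueE ct.
by rewrite mulrS addrCA.
Qed.

Lemma pump_block_word (v : nat -> V) (Q : V -> Prop) p n0 n1 n2 n3 :
  pumping_property (fun w : seq 'I_4 => Q (word_value v w)) p ->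
  Q (word_value v (block_word n0 n1 n2 n3)) -> (p < n1)%N -> (p < n2)%N ->
  exists t m0 m1 A, [/\ (t < 3)%N, (0 < m0 + m1 <= p)%N,
    A + (v t *+ m0 + v t.+1 *+ m1) = word_value v (block_word n0 n1 n2 n3) &
    forall s, Q (A + (v t *+ m0 + v t.+1 *+ m1) *+ s)].
Proof.
move=> pump Qw lt_n1 lt_n2.
have [|u [l [x [r [z [Ew small lr_gt0 pumped]]]]]] := pump _ Qw.
  by rewrite size_block_word; lia.
have Ew' : u ++ (l ++ x ++ r) ++ z = block_word n0 n1 n2 n3 by rewrite Ew !catA.
have [t lt_t pair_t] := short_factor_letter_pair Ew' small lt_n1 lt_n2.
have /word_value_letter_pair : all (letter_pair t) (l ++ r).
  by move: pair_t; rewrite !all_cat => /and3P [-> _ ->].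
move=> /(_ v) [m0 [m1 [sizeE valueE]]].
exists t, m0, m1, (word_value v (u ++ x ++ z)); split=> //.
- by rewrite -sizeE lr_gt0; move: small; rewrite !size_cat; lia.
- by rewrite Ew word_value_pump valueE.
- move=> s; have := pumped s.
  rewrite word_value_pump [X in _ + X]word_value_cat !word_value_flatten_nseq.
  by rewrite -mulrnDl -word_value_cat valueE.
Qed.

End WordValue.

Lemma Z2_noncyclic (g : int * int) : exists x, forall k, x <> g *+ k /\ x <> - (g *+ k).
Proof.
have [g2_0|g2_neq0] := eqVneq g.2 0.
  by exists (0, 1) => k; rewrite pairMnE g2_0 mul0rn; split=> -[].
exists (1, 0) => k; rewrite pairMnE.
split=> -[E1 /esym/eqP]; rewrite ?oppr_eq0 mulrn_eq0 (negPf g2_neq0) orbF => /eqP k0;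
  by move: E1; rewrite k0 mulr0n ?oppr0.
Qed.

Definition unit_vectors : nat -> int * int := nth 0 [:: (1, 0); (0, 1); (-1, 0); (0, -1)].

Lemma unit_vectors_pump_neq0 t m0 m1 : (t < 3)%N -> (0 < m0 + m1)%N ->
  unit_vectors t *+ m0 + unit_vectors t.+1 *+ m1 <> 0.
Proof. by case: t => [|[|[|t]]] // _ m_gt0; rewrite /= !pairMnE => -[]; lia. Qed.

Lemma unit_vectors_block_word x y N : (`|x| + `|y| <= N)%N ->
  word_value unit_vectors (block_word `|N%:Z + x| `|N%:Z + y| N N) = (x, y).
Proof.
move=> le_N; rewrite /block_word !word_value_cat !word_value_nseq /= !inordK //.
by rewrite !pairMnE; congr pair => /=; lia.
Qed.

Section PumpableCone.
Variable P : int * int -> Prop.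
Hypothesis P_cone : total_cone P.
Hypothesis P_pumping : forall v : nat -> int * int, (forall i, (i < 4)%N -> v i <> 0) ->
  exists p, pumping_property (fun w : seq 'I_4 => P (word_value v w)) p.

Lemma pumpable_cone_not_archimedean : ~ archimedean_cone P.
Proof.
move=> P_arch.
have [|p pump] := P_pumping (v := unit_vectors).
  by case=> [|[|[|[|i]]]] //= _ /eqP; rewrite ?oppr_eq0.
pose D (t : 'I_3 * 'I_p.+1 * 'I_p.+1) := unit_vectors t.1.1 *+ t.1.2 + unit_vectors t.1.1.+1 *+ t.2.
(* [nu] is smaller than every positive pumping increment of at most [p] letters. *)
have [[x y] [Pnu small]] := archimedean_small P_cone P_arch Z2_noncyclic (map D (enum predT)).
pose N := (`|x| + `|y| + p.+1)%N.
have value := @unit_vectors_block_word x y N (leq_addr _ _).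
have lt_y : (p < `|(N%:Z + y)%R|)%N by lia.
have lt_N : (p < N)%N by lia.
rewrite -value in Pnu.
have [t [m0 [m1 [A [lt_t /andP [m_gt0 le_m] AD pumped]]]]] := pump_block_word pump Pnu lt_y lt_N.
rewrite value in AD.
apply: (archimedean_pump_leaves_cone P_cone P_arch _ (unit_vectors_pump_neq0 lt_t m_gt0) _ AD pumped).
  by rewrite -value.
have lt_m0 : (m0 < p.+1)%N by lia.
have lt_m1 : (m1 < p.+1)%N by lia.
apply: small; apply/mapP; exists (Ordinal lt_t, Ordinal lt_m0, Ordinal lt_m1) => //.
by rewrite mem_enum.
Qed.

Lemma pumpable_cone_archimedean : archimedean_cone P.
Proof.
apply: NNPP => not_arch.
have [c [d [Pc Pd below]]] := not_archimedean_cone P_cone not_arch.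
pose v := nth 0 [:: d; - c; - d; c].
have [|p pump] := P_pumping (v := v).
  have neq0 x : P x -> x <> 0 by case: P_cone => P0 _ _ Px x0; apply: P0; rewrite -x0.
  by case=> [|[|[|[|i]]]] // _; rewrite /v /= => /eqP; rewrite ?oppr_eq0 => /eqP; apply: neq0.
have value : word_value v (block_word p.+1 p.+1 p.+1 p.+2) = c.
  rewrite /block_word !word_value_cat !word_value_nseq /v !inordK //=.
  by rewrite !mulNrn addrCA addNKr (mulrSr c p.+1) addKr.
have Pw : P (word_value v (block_word p.+1 p.+1 p.+1 p.+2)) by rewrite value.
have [t [m0 [m1 [A [lt_t /andP [m_gt0 _] AD pumped]]]]] :=
  pump_block_word pump Pw (ltnSn p) (ltnSn p).
rewrite value in AD.
have Pplus : P (c + (v t *+ m0 + v t.+1 *+ m1)).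
  by rewrite -AD -addrA -mulr2n; apply: pumped.
have Pminus : P (c - (v t *+ m0 + v t.+1 *+ m1)).
  by rewrite -AD addrK -[A]addr0 -(mulr0n (v t *+ m0 + v t.+1 *+ m1)); apply: pumped.
case: t lt_t Pplus Pminus {AD pumped} => [|[|[|t]]] // _ /= Pplus Pminus.
- rewrite mulNrn in Pplus Pminus.
  exact: (nonarchimedean_pump_sub P_cone Pc Pd below m_gt0 (conj Pplus Pminus)).
- by rewrite !mulNrn -opprD in Pplus; apply: (nonarchimedean_pump_add P_cone Pc Pd below m_gt0).
- have DE : (- d) *+ m0 + c *+ m1 = - (d *+ m0 - c *+ m1) by rewrite mulNrn opprB addrC.
  rewrite DE in Pplus; rewrite DE opprK in Pminus.
  exact: (nonarchimedean_pump_sub P_cone Pc Pd below m_gt0 (conj Pminus Pplus)).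
Qed.

Lemma no_pumpable_total_cone_Z2 : False.
Proof. exact: pumpable_cone_not_archimedean pumpable_cone_archimedean. Qed.

End PumpableCone.

Lemma group_hom1 (G H : group) (f : G -> H) : group_hom f -> f (gone G) = gone H.
Proof.
move=> f_hom; have := congr1 (gmul (ginv (f (gone G)))) (f_hom (gone G) (gone G)).
by rewrite gmul1 gmulA gmulV gmul1.
Qed.

Lemma eval_word_cat (G : group) (X : Type) (gen : X -> G) w1 w2 :
  eval_word gen (w1 ++ w2) = gmul (eval_word gen w1) (eval_word gen w2).
Proof. by elim: w1 => [|a w1 IH] /=; rewrite ?gmul1 // IH gmulA. Qed.

Section SubgroupCone.
Variables (G : group) (lt : G -> G -> Prop) (phi : Z2_group -> G).
Hypotheses (lt_order : left_order lt) (phi_hom : group_hom phi) (phi_inj : injective phi).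

Definition subgroup_cone (z : int * int) := positive_cone lt (phi z).

Let phiD x y : phi (x + y) = gmul (phi x) (phi y). Proof. exact: phi_hom. Qed.
Let phi0 : phi 0 = gone G. Proof. exact: group_hom1 phi_hom. Qed.

Lemma subgroup_cone_total : total_cone subgroup_cone.
Proof.
case: lt_order => irr trans total inv; rewrite /subgroup_cone /positive_cone; split.
- by rewrite phi0; apply: irr.
- move=> x y Px Py; apply: trans Px _; rewrite -[phi x]gmulr1 phiD.
  exact: inv.
- move=> x x_neq0; have : phi x <> gone G by rewrite -phi0 => /phi_inj.
  case/nesym/total => lt_x; [by left | right].
  by have := inv (phi (- x)) _ _ lt_x; rewrite gmulr1 -phiD addNr phi0.
Qed.

Lemma subgroup_cone_context_free (X : finType) (gen : X -> G) (S : finType) (f : S -> int * int) :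
  generating gen -> context_free (fun w => positive_cone lt (eval_word gen w)) ->
  (forall a, f a <> 0) -> context_free (fun s => subgroup_cone (\sum_(a <- s) f a)).
Proof.
move=> gen_ok cf f_neq0.
have [h hE] := fin_all_exists (fun a => gen_ok (phi (f a))).
have h_neq0 a : h a <> [::].
  by move=> ha; apply: (f_neq0 a); apply: phi_inj; rewrite -hE ha phi0.
have evalE s : eval_word gen (flatten (map h s)) = phi (\sum_(a <- s) f a).
  elim: s => [|a s IH]; first by rewrite big_nil phi0.
  by rewrite /= eval_word_cat IH hE big_cons phiD.
have [M accM] := context_free_preim h_neq0 cf.
by exists M => s; rewrite -accM evalE.
Qed.

End SubgroupCone.

Theorem no_Z2_in_cf_ordered_group (G : group) (lt : G -> G -> Prop) (phi : Z2_group -> G) :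
  cf_preimage_left_order lt -> group_hom phi -> injective phi -> False.
Proof.
move=> [lt_order [X [gen [gen_ok cf]]]] phi_hom phi_inj.
apply: (no_pumpable_total_cone_Z2 (subgroup_cone_total lt_order phi_hom phi_inj)) => v v_neq0.
apply: context_free_pumping.
exact: (subgroup_cone_context_free phi_hom phi_inj (f := fun c : 'I_4 => v c) gen_ok cf
          (fun c => v_neq0 c (ltn_ord c))).
Qed.

Theorem propositionA6 :
  (forall lt : Z2_group -> Z2_group -> Prop, ~ cf_preimage_left_order lt) /\
  (forall (G : group), finitely_generated G ->
     (exists lt : G -> G -> Prop, cf_preimage_left_order lt) ->
     ~ (exists phi : Z2_group -> G, group_hom phi /\ injective phi)).
Proof.
split=> [lt cf|G _ [lt cf] [phi [phi_hom phi_inj]]].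
  by apply: (no_Z2_in_cf_ordered_group (phi := id) cf) => // x y.
exact: no_Z2_in_cf_ordered_group cf phi_hom phi_inj.
Qed.
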